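(* Let $\Xi:M_p\to M_q$ be an entanglement-breaking channel of the form $\Xi(X)=\sum_{i=1}^l\mathrm{Tr}[XM_i]\sigma_i$, where $(M_i)_{i=1}^l$ is a POVM on $\mathbb C^p$ and $\sigma_i\in D_q$, and let $\Psi:M_N\to M_k$ be a quantum channel. Then the image of all states under $\Xi\otimes\Psi$ is $$K_{\Xi\otimes\Psi}=(\Xi\otimes\Psi)(D_{pN})=\mathrm{hull}\Big\{\sum_{i=1}^l\sigma_i\otimes\Psi(BM_i^TB^* ):\ B\in M_{N,p}(\mathbb C),\ \mathrm{Tr}[BB^*]=1\Big\}.$$
   Context: A POVM is a family of positive semidefinite matrices summing to the identity. $M_i^T$ is the transpose in the canonical basis; $M_{N,p}(\mathbb C)$ is the space of $N\times p$ complex matrices; $\mathrm{hull}$ is the convex hull; $D_d$ is the set of $d\times d$ density matrices. *)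

From HB Require Import structures.
From mathcomp Require Import all_boot all_order all_algebra.
From mathcomp Require Import complex mxtens.
From mathcomp Require Import reals.

Set Implicit Arguments.
Unset Strict Implicit.
Unset Printing Implicit Defensive.

Import Order.TTheory GRing.Theory Num.Theory.
Local Open Scope ring_scope.
Local Open Scope sesquilinear_scope.

Section QDefs.
Context {C : numClosedFieldType}.

Definition psdmx n (A : 'M[C]_n) : Prop :=
  A ^t* = A /\ forall x : 'cV[C]_n, 0 <= (x ^t* *m A *m x) 0 0.

Definition density n (A : 'M[C]_n) : Prop := psdmx A /\ \tr A = 1.

Definition povm l p (M : 'I_l -> 'M[C]_p) : Prop :=
  (forall i, psdmx (M i)) /\ \sum_(i < l) M i = 1%:M.

(* tensor product f (x) g of two maps on matrices, defined on the matrix units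
   E_{i1 j1} (x) E_{i2 j2} (Kronecker convention of mxtens: index (i1,i2) |-> i1*c+i2)
   and extended linearly *)
Definition tens_map a b c d (f : 'M[C]_a -> 'M[C]_b) (g : 'M[C]_c -> 'M[C]_d)
    (X : 'M[C]_(a * c)) : 'M[C]_(b * d) :=
  \sum_(i1 < a) \sum_(j1 < a) \sum_(i2 < c) \sum_(j2 < c)
     X (mxtens_index (i1, i2)) (mxtens_index (j1, j2))
       *: (f (delta_mx i1 j1) *t g (delta_mx i2 j2)).

Definition completely_positive N k (Psi : {linear 'M[C]_N -> 'M[C]_k}) : Prop :=
  forall m (X : 'M[C]_(m * N)), psdmx X -> psdmx (tens_map (fun Y : 'M[C]_m => Y) Psi X).

Definition trace_preserving N k (Psi : {linear 'M[C]_N -> 'M[C]_k}) : Prop :=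
  forall X, \tr (Psi X) = \tr X.

Definition channel N k (Psi : {linear 'M[C]_N -> 'M[C]_k}) : Prop :=
  completely_positive Psi /\ trace_preserving Psi.

Definition in_hull m n (S : 'M[C]_(m, n) -> Prop) (X : 'M[C]_(m, n)) : Prop :=
  exists (r : nat) (w : 'I_r -> C) (Y : 'I_r -> 'M[C]_(m, n)),
    [/\ forall i, 0 <= w i, \sum_(i < r) w i = 1, forall i, S (Y i)
      & X = \sum_(i < r) w i *: Y i].

End QDefs.

(* Xi (x) Psi is linear and sends X to sum_i sigma_i (x) Psi(Tr_1[(M_i^T (x) 1) X]).
   On the pure state |b><b| with b = vec B this is sum_i sigma_i (x) Psi(B M_i^T B^* ).
   By the spectral theorem every state is a convex combination of pure states, and
   conversely a convex combination of pure states is a state; linearity then identifies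
   the image of D_pN with the convex hull. *)

From HB Require Import structures.
From mathcomp Require Import all_boot all_order all_algebra.
From mathcomp Require Import complex mxtens.
From mathcomp Require Import reals.
Import Order.TTheory GRing.Theory Num.Theory.
Local Open Scope ring_scope.
Local Open Scope sesquilinear_scope.

Set Implicit Arguments.
Unset Strict Implicit.
Unset Printing Implicit Defensive.

Lemma exchange_big4_last (V : nmodType) a b c d n
    (F : 'I_a -> 'I_b -> 'I_c -> 'I_d -> 'I_n -> V) :
  \sum_(i < a) \sum_(j < b) \sum_(k < c) \sum_(l < d) \sum_(m < n) F i j k l m
  = \sum_(m < n) \sum_(i < a) \sum_(j < b) \sum_(k < c) \sum_(l < d) F i j k l m.
Proof.
symmetry; rewrite exchange_big; apply: eq_bigr => i _.
rewrite exchange_big; apply: eq_bigr => j _.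
by rewrite exchange_big; apply: eq_bigr => k _; rewrite exchange_big.
Qed.

Lemma exchange_big22 (V : nmodType) a b c d (F : 'I_a -> 'I_b -> 'I_c -> 'I_d -> V) :
  \sum_(i < a) \sum_(j < b) \sum_(k < c) \sum_(l < d) F i j k l
  = \sum_(k < c) \sum_(l < d) \sum_(i < a) \sum_(j < b) F i j k l.
Proof.
transitivity (\sum_(i < a) \sum_(k < c) \sum_(l < d) \sum_(j < b) F i j k l).
  apply: eq_bigr => i _; rewrite exchange_big; apply: eq_bigr => k _.
  by rewrite exchange_big.
by rewrite exchange_big; apply: eq_bigr => k _; rewrite exchange_big.
Qed.

Lemma sum_mxtens_index (V : nmodType) m n (F : 'I_(m * n) -> V) :
  \sum_(k < m * n) F k = \sum_(i < m) \sum_(j < n) F (mxtens_index (i, j)).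
Proof.
rewrite pair_big /= (reindex (@mxtens_index m n)) /=; first by apply: eq_bigr => -[].
by exists (@mxtens_unindex m n) => x _; rewrite (mxtens_indexK, mxtens_unindexK).
Qed.

Lemma mxtrace_delta_mull (R : pzRingType) n (i j : 'I_n) (A : 'M[R]_n) :
  \tr (delta_mx i j *m A) = A j i.
Proof.
rewrite /mxtrace (bigD1 i) //= big1 ?addr0.
  rewrite mxE (bigD1 j) //= big1 ?addr0; first by rewrite mxE !eqxx mul1r.
  by move=> k /negbTE kj; rewrite mxE kj andbF mul0r.
by move=> k /negbTE ki; rewrite mxE big1 // => x _; rewrite mxE ki mul0r.
Qed.

Section TensmxBilinear.
Variable R : comPzRingType.

Lemma tensmx_sumr m n p q I (r : seq I) (P : pred I)
    (A : 'M[R]_(m, n)) (B : I -> 'M[R]_(p, q)) :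
  A *t (\sum_(j <- r | P j) B j) = \sum_(j <- r | P j) A *t B j.
Proof.
apply/matrixP => x y; rewrite !mxE !summxE mulr_sumr.
by apply: eq_bigr => j _; rewrite mxE.
Qed.

Lemma tensmx_suml m n p q I (r : seq I) (P : pred I)
    (A : I -> 'M[R]_(m, n)) (B : 'M[R]_(p, q)) :
  (\sum_(j <- r | P j) A j) *t B = \sum_(j <- r | P j) A j *t B.
Proof.
apply/matrixP => x y; rewrite !mxE !summxE mulr_suml.
by apply: eq_bigr => j _; rewrite mxE.
Qed.

Lemma tensmxZr m n p q c (A : 'M[R]_(m, n)) (B : 'M[R]_(p, q)) :
  A *t (c *: B) = c *: (A *t B).
Proof. by apply/matrixP => x y; rewrite !mxE mulrCA. Qed.

Lemma tensmxZl m n p q c (A : 'M[R]_(m, n)) (B : 'M[R]_(p, q)) :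
  (c *: A) *t B = c *: (A *t B).
Proof. by apply/matrixP => x y; rewrite !mxE mulrA. Qed.

End TensmxBilinear.

Section TensMapLinear.
Context {C : numClosedFieldType} (a b c d : nat).
Variables (f : 'M[C]_a -> 'M[C]_b) (g : 'M[C]_c -> 'M[C]_d).

Fact tens_map_is_linear : linear (tens_map f g).
Proof.
move=> s X Y; rewrite /tens_map scaler_sumr -big_split.
do 3 (apply: eq_bigr => ? _; rewrite scaler_sumr -big_split).
by apply: eq_bigr => ? _; rewrite !mxE scalerDl scalerA.
Qed.

HB.instance Definition _ :=
  GRing.isLinear.Build C _ _ _ (tens_map f g) tens_map_is_linear.

End TensMapLinear.

Section MeasurePrepare.
Context {C : numClosedFieldType}.

(* ptrace_with A X = Tr_1[(A^T (x) 1) X] *)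
Definition ptrace_with p N (A : 'M[C]_p) (X : 'M[C]_(p * N)) : 'M[C]_N :=
  \matrix_(a, b) \sum_(i < p) \sum_(j < p)
     X (mxtens_index (i, a)) (mxtens_index (j, b)) * A j i.

Definition measure_prepare l p q (M : 'I_l -> 'M[C]_p) (sigma : 'I_l -> 'M[C]_q)
    (X : 'M[C]_p) : 'M[C]_q :=
  \sum_(i < l) \tr (X *m M i) *: sigma i.

Lemma tens_map_measure_prepare l p q N k (M : 'I_l -> 'M[C]_p)
    (sigma : 'I_l -> 'M[C]_q) (Psi : {linear 'M[C]_N -> 'M[C]_k}) X :
  tens_map (measure_prepare M sigma) Psi X
  = \sum_(i < l) sigma i *t Psi (ptrace_with (M i) X).
Proof.
transitivity (\sum_(i1 < p) \sum_(j1 < p) \sum_(a < N) \sum_(b < N) \sum_(i < l)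
   (X (mxtens_index (i1, a)) (mxtens_index (j1, b)) * M i j1 i1)
     *: (sigma i *t Psi (delta_mx a b))).
  rewrite /tens_map; do 4! (apply: eq_bigr => ? _).
  rewrite tensmx_suml scaler_sumr; apply: eq_bigr => i _.
  by rewrite tensmxZl mxtrace_delta_mull scalerA.
rewrite exchange_big4_last; apply: eq_bigr => i _.
rewrite [ptrace_with _ _]matrix_sum_delta linear_sum tensmx_sumr exchange_big22.
apply: eq_bigr => a _; rewrite linear_sum tensmx_sumr; apply: eq_bigr => b _.
rewrite linearZ tensmxZr mxE scaler_suml; apply: eq_bigr => i1 _.
by rewrite scaler_suml.
Qed.

End MeasurePrepare.

Section Vectorization.
Context {C : numClosedFieldType} (p N : nat).

Definition tensvec (B : 'M[C]_(N, p)) : 'cV[C]_(p * N) :=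
  \col_k B (mxtens_unindex k).2 (mxtens_unindex k).1.

Definition untensvec (u : 'cV[C]_(p * N)) : 'M[C]_(N, p) :=
  \matrix_(b, a) u (mxtens_index (a, b)) 0.

Lemma tensvecE (B : 'M[C]_(N, p)) i j : tensvec B (mxtens_index (i, j)) 0 = B j i.
Proof. by rewrite mxE mxtens_indexK. Qed.

Lemma untensvecK : cancel untensvec tensvec.
Proof.
move=> u; apply/matrixP => x y; case: (mxtens_indexP x) => i j.
by rewrite ord1 tensvecE mxE.
Qed.

Lemma ptrace_with_tensvec (A : 'M[C]_p) (B : 'M[C]_(N, p)) :
  ptrace_with A (tensvec B *m (tensvec B)^t*) = B *m A^T *m B^t*.
Proof.
apply/matrixP => a b; rewrite !mxE.
under [RHS]eq_bigr => j _ do rewrite !mxE big_distrl /=.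
rewrite [RHS]exchange_big; apply: eq_bigr => i _; apply: eq_bigr => j _.
by rewrite !mxE big_ord1 !mxE !mxtens_indexK /= mulrAC.
Qed.

Lemma mxtrace_tensvec (B : 'M[C]_(N, p)) :
  \tr (tensvec B *m (tensvec B)^t*) = \tr (B *m B^t*).
Proof.
rewrite /mxtrace sum_mxtens_index exchange_big; apply: eq_bigr => a _.
rewrite mxE; apply: eq_bigr => b _.
by rewrite !mxE big_ord1 !mxE mxtens_indexK.
Qed.

End Vectorization.

Section PositiveSemidefinite.
Context {C : numClosedFieldType}.

Lemma psdmx_rank1 n (v : 'cV[C]_n) : psdmx (v *m v^t*).
Proof.
split; first by rewrite trmx_mul map_mxM trmxCK.
move=> x; rewrite mulmxA -mulmxA.
have -> : v^t* *m x = (x^t* *m v)^t* by rewrite trmx_mul map_mxM trmxCK.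
by rewrite mxE big_ord1 !mxE mul_conjC_ge0.
Qed.

Lemma psdmx_conic_comb n r (w : 'I_r -> C) (A : 'I_r -> 'M[C]_n) :
  (forall j, 0 <= w j) -> (forall j, psdmx (A j)) ->
  psdmx (\sum_(j < r) w j *: A j).
Proof.
move=> w_ge0 psdA; split.
  apply/matrixP => a b; rewrite !mxE !summxE rmorph_sum; apply: eq_bigr => j _.
  have Aji : (A j b a)^* = A j a b.
    by have [/matrixP/(_ a b) + _] := psdA j; rewrite !mxE.
  by rewrite !mxE -Aji rmorphM /= (geC0_conj (w_ge0 j)).
move=> x; rewrite mulmx_sumr mulmx_suml summxE; apply: sumr_ge0 => j _.
by rewrite -scalemxAr -scalemxAl mxE mulr_ge0 ?(psdA j).2.
Qed.

Lemma psdmx_spectral_rank1 n (rho : 'M[C]_n) : psdmx rho ->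
  exists (d : 'I_n -> C) (u : 'I_n -> 'cV[C]_n),
    [/\ forall j, 0 <= d j, forall j, \tr (u j *m (u j)^t*) = 1
      & rho = \sum_(j < n) d j *: (u j *m (u j)^t*)].
Proof.
move=> [rho_herm rho_ge0].
have rho_normal : rho \is normalmx by apply/normalmxP; rewrite rho_herm.
set P := spectralmx rho; set D := spectral_diag rho.
have PU : P *m P^t* = 1%:M by apply/unitarymxP; exact: spectral_unitarymx.
have rhoE : rho = P^t* *m diag_mx D *m P.
  by rewrite -invmx_unitary ?spectral_unitarymx //; apply/orthomx_spectralP.
have adj_colE j : (col j (P^t*))^t* = delta_mx 0 j *m P.
  by rewrite colE trmx_mul map_mxM trmxCK trmx_delta map_delta_mx.
have diagE : P *m rho *m P^t* = diag_mx D.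
  by rewrite rhoE !mulmxA PU mul1mx -mulmxA PU mulmx1.
exists (fun j => D 0 j), (fun j => col j (P^t*)); split.
- move=> j; have := rho_ge0 (col j (P^t*)).
  have -> : (col j (P^t*))^t* *m rho *m col j (P^t*)
         = delta_mx 0 j *m diag_mx D *m delta_mx j 0.
    by rewrite adj_colE colE -diagE !mulmxA.
  by rewrite -rowE row_diag_mx -scalemxAl mul_delta_mx !mxE !eqxx mulr1.
- move=> j; rewrite mxtrace_mulC adj_colE colE mulmxA -(mulmxA _ P) PU mulmx1.
  by rewrite mul_delta_mx /mxtrace big_ord1 mxE !eqxx.
apply/matrixP => a b; rewrite {1}rhoE mul_mx_diag mxE summxE.
by apply: eq_bigr => j _; rewrite !mxE big_ord1 !mxE conjCK mulrA [_ * D 0 j]mulrC.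
Qed.

End PositiveSemidefinite.

Theorem lemma8p6 (R : realType) (p q N k l : nat)
    (M : 'I_l -> 'M[R[i]]_p) (sigma : 'I_l -> 'M[R[i]]_q)
    (Psi : {linear 'M[R[i]]_N -> 'M[R[i]]_k}) :
  povm M -> (forall i, density (sigma i)) -> channel Psi ->
  let Xi := fun X : 'M[R[i]]_p => \sum_(i < l) \tr (X *m M i) *: sigma i in
  forall Z : 'M[R[i]]_(q * k),
    (exists rho : 'M[R[i]]_(p * N), density rho /\ Z = tens_map Xi Psi rho)
    <->
    in_hull (fun Y : 'M[R[i]]_(q * k) =>
               exists B : 'M[R[i]]_(N, p),
                 \tr (B *m B ^t*) = 1 /\
                 Y = \sum_(i < l) (sigma i *t Psi (B *m (M i)^T *m B ^t*))) Z.
Proof.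
move=> _ _ _ Xi Z; rewrite /Xi -/(measure_prepare M sigma).
have image_pure B : tens_map (measure_prepare M sigma) Psi (tensvec B *m (tensvec B)^t*)
    = \sum_(i < l) sigma i *t Psi (B *m (M i)^T *m B^t*).
  by rewrite tens_map_measure_prepare; apply: eq_bigr => i _; rewrite ptrace_with_tensvec.
split.
- move=> [rho [[rho_psd rho_tr] ->]].
  have [d [u [d_ge0 u_tr rhoE]]] := psdmx_spectral_rank1 rho_psd.
  exists (p * N)%N, d, (fun j => tens_map (measure_prepare M sigma) Psi
                                   (u j *m (u j)^t*)); split => //.
  + rewrite -rho_tr rhoE raddf_sum; apply: eq_bigr => j _.
    by rewrite /= mxtraceZ u_tr mulr1.
  + move=> j; exists (untensvec (u j)).
    by rewrite -mxtrace_tensvec -image_pure untensvecK.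
  + by rewrite rhoE linear_sum; apply: eq_bigr => j _; rewrite linearZ.
move=> [r [w [Y [w_ge0 w_sum1 pureY ->]]]].
have [B BY] := fin_all_exists pureY.
exists (\sum_(j < r) w j *: (tensvec (B j) *m (tensvec (B j))^t*)); split; first split.
- by apply: psdmx_conic_comb => // j; exact: psdmx_rank1.
- rewrite raddf_sum -w_sum1; apply: eq_bigr => j _.
  by rewrite /= mxtraceZ mxtrace_tensvec (BY j).1 mulr1.
rewrite linear_sum; apply: eq_bigr => j _.
by rewrite linearZ (BY j).2 -image_pure.
Qed.
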